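(* Let $p$ be a prime, $n\ge2$, let $f,g:\mathbb{F}_p^n\to\mathbb{F}_p$ and let $\mathcal{E}=\{e_1,\dots,e_n\}$ be a basis of $\mathbb{F}_p^n$ over $\mathbb{F}_p$ with coordinates $x_1,\dots,x_n$ relative to $\mathcal{E}$. Suppose that for some $i\neq j$ in $\{1,\dots,n\}$, $\Delta_{e_i}f(x)=\Delta_{e_j}g(x)$ for all $x$. Then \[\deg_{x_j}(\Delta_{e_i}f)=\deg_{x_j}(\Delta_{e_j}g)<p-1\quad\text{and}\quad \deg_{x_i}(\Delta_{e_j}g)=\deg_{x_i}(\Delta_{e_i}f)<p-1.\]
   Context: $\Delta_aF(x)=F(x+a)-F(x)$. Writing $x=\sum_k x_ke_k$, every function $h:\mathbb{F}_p^n\to\mathbb{F}_p$ has a unique algebraic normal form $h=\sum_{(i_1,\dots,i_n)\in\{0,\dots,p-1\}^n}h_{(i_1,\dots,i_n)}\prod_k x_k^{i_k}$ with coefficients in $\mathbb{F}_p$, and $\deg_{x_k}(h)=\max\{i_k \mid h_{(i_1,\dots,i_n)}\ne0\}$. *)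

From mathcomp Require Import all_boot all_order all_algebra.
Set Implicit Arguments. Unset Strict Implicit. Unset Printing Implicit Defensive.
Import GRing.Theory.
Local Open Scope ring_scope.

Definition Delta (p n : nat) (a : 'rV['F_p]_n) (F : 'rV['F_p]_n -> 'F_p)
  : 'rV['F_p]_n -> 'F_p := fun x => F (x + a) - F x.

Definition expvec (p n : nat) := {ffun 'I_n -> 'I_p}.

(* The basis E = {e_1,...,e_n} is given as the rows of an invertible matrix E
   (e_k = row k E); the point with coordinates c is x = \sum_k c_k e_k = c *m E. *)

Definition is_anf (p n : nat) (E : 'M['F_p]_n) (h : 'rV['F_p]_n -> 'F_p)
  (a : {ffun expvec p n -> 'F_p}) : bool :=
  [forall c : 'rV['F_p]_n,
     h (c *m E) == \sum_(m : expvec p n) a m * \prod_(k < n) c 0 k ^+ (m k : nat)].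

(* The (unique) algebraic normal form of h (all-zero if none were found). *)
Definition anf (p n : nat) (E : 'M['F_p]_n) (h : 'rV['F_p]_n -> 'F_p)
  : {ffun expvec p n -> 'F_p} :=
  odflt [ffun=> 0] [pick a | is_anf E h a].

Definition degx (p n : nat) (E : 'M['F_p]_n) (k : 'I_n) (h : 'rV['F_p]_n -> 'F_p)
  : nat :=
  \max_(m : expvec p n | anf E h m != 0) (m k : nat).

From mathcomp Require Import all_boot all_order all_algebra all_fingroup all_solvable all_field.
From mathcomp Require Import zify.
Set Implicit Arguments. Unset Strict Implicit. Unset Printing Implicit Defensive.
Import GRing.Theory FinRing.Theory.
Local Open Scope ring_scope.

(* The coefficient a_m of the monomial x^m in the algebraic normal form of h is
   recovered by the orthogonality relation a_m = \sum_c w_m(c) h(c), where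
   w_m(c) = \prod_l w_(m_l)(c_l) with w_0(t) = 1 - t^(p-1) and
   w_e(t) = - t^(p-1-e) for e > 0; this follows from the power sums
   \sum_t t^e over a finite field, which vanish unless 0 < e and (p-1) | e.
   The weight w_(p-1) is the constant -1, so when m_k = p-1 the weight w_m is
   invariant under c |-> c + e_k, and the sum against h(x + e_k) - h(x)
   telescopes to 0.  Hence Delta_(e_k) h has degree < p-1 in x_k. *)

Section FinFieldPowerSums.

Variable F : finFieldType.
Local Notation q := #|F|.

Let q_gt1 : (1 < q)%N := finNzRing_gt1 F.
Let q_pred_gt0 : (0 < q.-1)%N. Proof. by rewrite -ltnS prednK // ltnW. Qed.

Lemma natr_card_finField : q%:R = 0 :> F.
Proof. by rewrite -(@zmodXgE F) -cardsT expg_cardG ?inE. Qed.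

Lemma expf_card_pred (t : F) : t != 0 -> t ^+ q.-1 = 1.
Proof.
move=> t_nz; apply: (mulfI t_nz); rewrite mulr1 -exprS.
by rewrite prednK ?expf_card // ltnW.
Qed.

Lemma sum_expr_finField_dvd e : (0 < e)%N -> (q.-1 %| e)%N ->
  \sum_(t : F) t ^+ e = -1.
Proof.
move=> /[swap] /dvdnP[k ->] e_gt0; rewrite (eq_bigr (fun t => 1 - (t == 0)%:R)).
  rewrite sumrB sumr_const natr_card_finField sub0r (bigD1 0) //= eqxx big1 ?addr0 //.
  by move=> t /negPf ->.
move=> t _; have [->|t_nz] := eqVneq t 0; first by rewrite expr0n (gtn_eqF e_gt0) subrr.
by rewrite mulnC exprM expf_card_pred // expr1n subr0.
Qed.

Lemma sum_expr_finField_ndvd e : ~~ (q.-1 %| e)%N -> \sum_(t : F) t ^+ e = 0.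
Proof.
move=> e_ndvd.
have : has q.-1.-primitive_root (enum (predC1 (0 : F))).
  apply: has_prim_root; rewrite ?enum_uniq // -?cardE ?cardC1 //.
  by apply/allP => t; rewrite mem_enum unity_rootE => /expf_card_pred ->.
case/hasP => z; rewrite mem_enum /= => z_nz z_prim.
have ze_neq1 : z ^+ e != 1 by rewrite -(prim_order_dvd z_prim).
set S := \sum_(t : F) t ^+ e.
have S_invariant : S = z ^+ e * S.
  rewrite /S mulr_sumr [LHS](reindex_inj (mulfI z_nz)) /=.
  by apply: eq_bigr => t _; rewrite exprMn.
have /eqP : (1 - z ^+ e) * S = 0 by rewrite mulrBl mul1r -S_invariant subrr.
by rewrite mulf_eq0 subr_eq0 eq_sym (negbTE ze_neq1) => /eqP.
Qed.

Lemma sum_expr_finField e :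
  \sum_(t : F) t ^+ e = - ((0 < e)%N && (q.-1 %| e)%N)%:R.
Proof.
case: e => [|e] /=.
  by rewrite (eq_bigr (fun _ => 1)) // sumr_const natr_card_finField oppr0.
have [dvd|ndvd] := boolP (q.-1 %| e.+1)%N; first exact: sum_expr_finField_dvd.
by rewrite oppr0; apply: sum_expr_finField_ndvd.
Qed.

Definition coef_weight (m : nat) (t : F) : F :=
  if m == 0%N then 1 - t ^+ q.-1 else - t ^+ (q.-1 - m).

Lemma coef_weight_pred m (t : F) : m = q.-1 -> coef_weight m t = -1.
Proof.
by move=> ->; rewrite /coef_weight subnn expr0 -(subnK q_gt1) addn2 /=.
Qed.

Lemma sum_coef_weight_expr m m' : (m < q)%N -> (m' < q)%N ->
  \sum_(t : F) coef_weight m' t * t ^+ m = (m == m')%:R.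
Proof.
rewrite /coef_weight => m_lt m'_lt; case: eqP => [-> | /eqP m'_nz].
  under eq_bigr do rewrite mulrBl mul1r -exprD.
  rewrite sumrB !sum_expr_finField addn_gt0 q_pred_gt0 dvdn_addr // opprK.
  by case: m {m_lt} => [|m] /=; rewrite ?dvdn0 ?oppr0 ?add0r ?addNr.
under eq_bigr do rewrite mulNr -exprD.
rewrite sumrN sum_expr_finField opprK; congr ((nat_of_bool _)%:R).
apply/andP/eqP => [[e_gt0 /dvdnP[k e_eq]] | <-]; last by rewrite subnK ?dvdnn //; lia.
by move: e_gt0 e_eq m'_nz => + + /eqP; case: k => [|[|k]]; rewrite ?mulSn; lia.
Qed.

End FinFieldPowerSums.

Lemma sum_row_prod (T : finType) (R : comPzSemiRingType) n (G : 'I_n -> T -> R) :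
  \sum_(c : 'rV[T]_n) \prod_(l < n) G l (c 0 l) = \prod_(l < n) \sum_(t : T) G l t.
Proof.
rewrite bigA_distr_bigA (reindex (fun f : {ffun 'I_n -> T} => \row_l f l)) /=.
  by apply: eq_bigr => f _; apply: eq_bigr => l _; rewrite mxE.
exists (fun c : 'rV[T]_n => [ffun l => c 0 l]) => [f _|c _].
  by apply/ffunP => l; rewrite ffunE mxE.
by apply/rowP => l; rewrite mxE ffunE.
Qed.

Lemma prod_eq_ffun_natr (R : comPzSemiRingType) (I : finType) (J : eqType)
    (u v : {ffun I -> J}) :
  \prod_(i : I) ((u i == v i)%:R : R) = (u == v)%:R.
Proof.
have [<-|neq_uv] := eqVneq u v; first by rewrite big1 // => i _; rewrite eqxx.
have [i neq_i] : exists i, u i != v i.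
  apply/existsP; rewrite -negb_forall; apply: contra neq_uv => /forallP eq_uv.
  by apply/eqP/ffunP => i; apply/eqP.
by rewrite (bigD1 i) //= (negbTE neq_i) mul0r.
Qed.

Section AnfCoefficients.

Variable p : nat.
Hypothesis p_prime : prime p.
Local Notation K := 'F_p.

Definition mono_weight n (m : expvec p n) (c : 'rV[K]_n) : K :=
  \prod_(l < n) coef_weight (m l) (c 0 l).

Lemma sum_mono_weight_mono n (m m' : expvec p n) :
  \sum_(c : 'rV[K]_n) mono_weight m' c * \prod_(l < n) c 0 l ^+ m l = (m == m')%:R.
Proof.
under eq_bigr do rewrite -big_split /=.
rewrite (sum_row_prod (fun l t => coef_weight (m' l) t * t ^+ m l)).
rewrite -prod_eq_ffun_natr; apply: eq_bigr => l _.
by rewrite sum_coef_weight_expr ?card_Fp.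
Qed.

Lemma is_anf_coefE n (E : 'M[K]_n) h a m' : is_anf E h a ->
  a m' = \sum_(c : 'rV[K]_n) mono_weight m' c * h (c *m E).
Proof.
move=> /forallP h_anf; symmetry.
under eq_bigr do rewrite (eqP (h_anf _)) mulr_sumr.
rewrite exchange_big /=.
under eq_bigr do under eq_bigr do rewrite mulrCA.
under eq_bigr do rewrite -mulr_sumr sum_mono_weight_mono.
by rewrite (bigD1 m') //= eqxx mulr1 big1 ?addr0 // => m /negPf ->; rewrite mulr0.
Qed.

Lemma mono_weightD_delta n (m : expvec p n) k c : (m k : nat) = p.-1 ->
  mono_weight m (c + delta_mx 0 k) = mono_weight m c.
Proof.
move=> m_k; apply: eq_bigr => l _; rewrite !mxE eqxx /=.
have [->|_] := eqVneq l k; last by rewrite mulr0n addr0.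
by rewrite !coef_weight_pred ?card_Fp.
Qed.

Lemma anf_Delta_coef_pred n (E : 'M[K]_n) k h (m : expvec p n) :
  (m k : nat) = p.-1 -> anf E (Delta (row k E) h) m = 0.
Proof.
move=> m_k; rewrite /anf; case: pickP => [a a_anf | _] /=; last by rewrite ffunE.
rewrite (is_anf_coefE m a_anf) /Delta.
under eq_bigr do rewrite mulrBr.
rewrite sumrB [X in _ - X](reindex_inj (addIr (delta_mx 0 k))) /=.
apply/eqP; rewrite subr_eq0; apply/eqP; apply: eq_bigr => c _.
by rewrite mono_weightD_delta // mulmxDl -rowE.
Qed.

Lemma degx_Delta_lt n (E : 'M[K]_n) k h : (degx E k (Delta (row k E) h) < p.-1)%N.
Proof.
have p_gt1 := prime_gt1 p_prime.
apply: (@leq_ltn_trans p.-2); last lia.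
apply/bigmax_leqP => m m_nz.
have : (m k : nat) != p.-1 by apply: contra m_nz => /eqP /anf_Delta_coef_pred ->.
have := ltn_ord (m k); set e := nat_of_ord (m k); lia.
Qed.

End AnfCoefficients.

Lemma eq_degx p n (E : 'M['F_p]_n) k (h1 h2 : 'rV['F_p]_n -> 'F_p) :
  h1 =1 h2 -> degx E k h1 = degx E k h2.
Proof.
move=> h12; rewrite /degx /anf (@eq_pick _ _ (is_anf E h2)) // => a.
by apply: eq_forallb => c; rewrite h12.
Qed.

Theorem lemma3 (p n : nat) (hp : prime p) (hn : (2 <= n)%N)
  (f g : 'rV['F_p]_n -> 'F_p) (E : 'M['F_p]_n) (hE : E \in unitmx)
  (i j : 'I_n) (hij : i != j)
  (hfg : forall x : 'rV['F_p]_n, Delta (row i E) f x = Delta (row j E) g x) :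
  [/\ degx E j (Delta (row i E) f) = degx E j (Delta (row j E) g),
      (degx E j (Delta (row j E) g) < p.-1)%N,
      degx E i (Delta (row j E) g) = degx E i (Delta (row i E) f)
    & (degx E i (Delta (row i E) f) < p.-1)%N].
Proof.
split; [exact: eq_degx | exact: degx_Delta_lt | | exact: degx_Delta_lt].
by apply: eq_degx => x; rewrite hfg.
Qed.
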